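(* Let $\mathcal{E}$ be an ellipse with center $O$ that is not a circle. Consider the homothetic family: all triangles inscribed in $\mathcal{E}$ whose centroid is $O$, each with vertices listed counterclockwise. As $T$ ranges over this family: 1. The side length (hence also the circumradius) of the focal equilateral of $T$ is constant. 2. The centroid of the focal equilateral of $T$ lies on a fixed circle centered at $O$.
   Context: Equivalently, the homothetic family consists of the triangles inscribed in $\mathcal{E}$ and circumscribed about the ellipse that is the image of $\mathcal{E}$ under the homothety of center $O$ and ratio $1/2$. No member of this family is equilateral. It is known that over this family the sum of squared side lengths and the area are constant, and that the second isodynamic point $X_{16}$ moves on a circle centered at $O$. Hexagonal grid. Let $\zeta=e^{i\pi/3}$ and $\Lambda=\{m+n\zeta: m,n\in\mathbb{Z}\}$. Call $p,q\in\Lambda$ adjacent if $|p-q|=1$, and let $\mathcal{E}_\Lambda$ be the set of unordered pairs of adjacent lattice points. A hexagonal grid is a map $\varphi:\mathcal{E}_\Lambda\to\mathbb{C}$ such that for every $p\in\Lambda$ there exist $c_p,r_p\in\mathbb{C}$ with $\varphi(\{p,p+\zeta^k\})=c_p+r_p\zeta^k$ for $k=0,\dots,5$; these six points are the vertices of the hexagon $H_p$. Its reference triangle is $(\varphi(\{0,1\}),\varphi(\{1,\zeta\}),\varphi(\{\zeta,0\}))$. Every nondegenerate counterclockwise triangle $T=(A,B,C)$ is the reference triangle of a unique hexagonal grid. Chains and parabolas. For $p\in\Lambda$ and $e\in\{1,\zeta,\zeta^2\}$, the points $U_k=\varphi(\{p+ke,p+(k+1)e\})$, $k\in\mathbb{Z}$,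 form the vertex sequence of a chain. Chains with $e=1,\zeta^2,\zeta$ are called $A$-, $B$-, $C$-chains. Focal equilateral. By results of the paper, when $T$ is not equilateral each vertex sequence lies on a parabola, and parabolas of all $A$-chains (resp. $B$-, $C$-chains) share a focus $f_a$ (resp. $f_b$, $f_c$). The triangle $f_af_bf_c$ is equilateral with centroid $X_{16}(T)$ and squared side $\tfrac{3}{32}(a^2+b^2+c^2-2\sqrt3 S)$, where $a,b,c$ are the side lengths and $S$ is twice the area of $T$. This triangle is the focal equilateral of $T$. *)

From HB Require Import structures.
From mathcomp Require Import all_boot all_order all_algebra.
From mathcomp Require Import complex.
Set Implicit Arguments. Unset Strict Implicit. Unset Printing Implicit Defensive.
Import Order.TTheory GRing.Theory Num.Theory.
Local Open Scope ring_scope.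
Local Open Scope complex_scope.

Section Defs.
Variable R : rcfType.
Local Notation C := R[i].

Definition sqn (z : C) : R := complex.Re z ^+ 2 + complex.Im z ^+ 2.

(* zeta = e^{i pi/3} *)
Definition zeta : C := (1 / 2) +i* (Num.sqrt 3 / 2).

(* Lattice points m + n zeta of Lambda are encoded as pairs (m, n) of integers.
   lat_dir k is the encoding of zeta^k (k = 0..5):
   1 = (1,0), zeta = (0,1), zeta^2 = zeta - 1 = (-1,1), zeta^3 = -1 = (-1,0),
   zeta^4 = (0,-1), zeta^5 = 1 - zeta = (1,-1). *)
Definition latp := (int * int)%type.
Definition lat_add (p q : latp) : latp := (p.1 + q.1, p.2 + q.2)%R.
Definition lat_scale (k : int) (p : latp) : latp := (k * p.1, k * p.2)%R.
Definition lat_dir (k : nat) : latp :=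
  match k with
  | 0 => (1, 0) | 1 => (0, 1) | 2 => (-1, 1)
  | 3 => (-1, 0) | 4 => (0, -1) | _ => (1, -1) end%R.

(* A map on unordered pairs of adjacent lattice points is represented as a map
   phi on ordered pairs which is symmetric on adjacent pairs; the hexagonal
   grid condition: for each p there are c_p, r_p with
   phi {p, p + zeta^k} = c_p + r_p zeta^k for k = 0..5. *)
Definition hex_grid (phi : latp -> latp -> C) : Prop :=
  (forall p (k : nat), (k < 6)%N ->
     phi p (lat_add p (lat_dir k)) = phi (lat_add p (lat_dir k)) p) /\
  (forall p, exists cp rp : C, forall k : nat, (k < 6)%N ->
     phi p (lat_add p (lat_dir k)) = cp + rp * zeta ^+ k).

Definition ref_triangle (phi : latp -> latp -> C) : C * C * C :=
  (phi (0, 0)%R (1, 0)%R, phi (1, 0)%R (0, 1)%R, phi (0, 1)%R (0, 0)%R).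

Definition chain_vertex (phi : latp -> latp -> C) (p e : latp) (k : int) : C :=
  phi (lat_add p (lat_scale k e)) (lat_add p (lat_scale (k + 1) e)).

(* Parabola with focus f and directrix the line through d with direction u
   (u <> 0, f not on the directrix): z is on it iff
   |z - f| = dist(z, directrix), i.e. |z-f|^2 |u|^2 = Im(conj(u)(z-d))^2. *)
Definition on_parabola (f d u z : C) : Prop :=
  sqn (z - f) * sqn u = complex.Im ((u ^*) * (z - d)) ^+ 2.
Definition parabola_ok (f d u : C) : Prop :=
  u != 0 /\ complex.Im ((u ^*) * (f - d)) != 0.

Definition chain_focus (phi : latp -> latp -> C) (e : latp) (f : C) : Prop :=
  forall p : latp, exists d u : C, parabola_ok f d u /\
    forall k : int, on_parabola f d u (chain_vertex phi p e k).

Definition dirA : latp := (1, 0)%R.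
Definition dirB : latp := (-1, 1)%R.
Definition dirC : latp := (0, 1)%R.

Definition focal_equilateral (A B C' fa fb fc : C) : Prop :=
  exists phi : latp -> latp -> C, hex_grid phi /\
    ref_triangle phi = (A, B, C') /\
    chain_focus phi dirA fa /\ chain_focus phi dirB fb /\ chain_focus phi dirC fc.

(* Ellipse with center O, semi-axes a, b > 0 along the directions w, i*w
   (w a unit complex number). *)
Definition on_ellipse (O w : C) (a b : R) (z : C) : Prop :=
  let z' := (w ^*) * (z - O) in
  complex.Re z' ^+ 2 / a ^+ 2 + complex.Im z' ^+ 2 / b ^+ 2 = 1.

Definition ccw (A B C' : C) : Prop := 0 < complex.Im (((B - A) ^*) * (C' - A)).

Definition homothetic_member (O w : C) (a b : R) (A B C' : C) : Prop :=
  on_ellipse O w a b A /\ on_ellipse O w a b B /\ on_ellipse O w a b C' /\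
  (A + B + C') / 3%:R = O /\ ccw A B C'.

End Defs.

From HB Require Import structures.
From mathcomp Require Import all_boot all_order all_algebra.
From mathcomp Require Import complex ring lra.
Set Implicit Arguments. Unset Strict Implicit. Unset Printing Implicit Defensive.
Import Order.TTheory GRing.Theory Num.Theory.
Local Open Scope ring_scope.
Local Open Scope complex_scope.

(* The hexagonal grid with reference triangle (A, B, C) is unique: propagating the
   hexagon condition through the lattice shows that H_p has centre c_p and radius r_p
   quadratic and affine in p, with leading coefficient g = -A + (1 - zeta) B + zeta C.
   So every chain is a quadratic curve alpha + beta k + gamma k^2, and a parabola
   containing it has focus alpha - beta^2 / (4 gamma).  This gives the foci
   c_0 - r_0^2/g - g e^2/4 for the chain directions e = 1, zeta^2, zeta: an equilateral
   triangle with squared side 3|g|^2/16 centred at c_0 - r_0^2/g.  In the homothetic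
   family A, B, C are the images of E, zeta^2 E, -zeta E (|E| = 1) under the map
   x + iy |-> a x + i b y placed at O along w, whence |g| = 3|a - b|/2 and
   |c_0 - r_0^2/g - O| = (a + b)^2 / (2|a - b|), both independent of E. *)

Lemma int_ind_succ_pred (P : int -> Prop) :
  P 0 -> (forall k, P k -> P (k + 1)) -> (forall k, P k -> P (k - 1)) ->
  forall k, P k.
Proof.
move=> P0 PS PP; elim/int_ind => // n.
  by rewrite intS addrC; apply: PS.
by rewrite intS opprD addrC; apply: PP.
Qed.

Section Zeta.
Variable R : rcfType.
Local Notation C := R[i].
Local Notation z := (zeta R).

Lemma sqr_sqrt3 : Num.sqrt (3 : R) ^+ 2 = 3.
Proof. by rewrite sqr_sqrtr // ler0n. Qed.

Lemma zeta_sqr : z ^+ 2 = z - 1.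
Proof.
have h := sqr_sqrt3; rewrite /zeta expr2.
by apply/eqP; rewrite eq_complex /=; apply/andP; split; apply/eqP; field: h.
Qed.

Lemma Im_zeta_neq0 : complex.Im z != 0.
Proof. by rewrite /= mulf_neq0 ?invr_eq0 ?pnatr_eq0 // sqrtr_eq0 -ltNge ltr0n. Qed.

Lemma zeta_neq0 : z != 0.
Proof. by apply: contraNneq Im_zeta_neq0 => ->. Qed.

Lemma zeta_neq1 : z != 1.
Proof. by apply: contraNneq Im_zeta_neq0 => ->. Qed.

Lemma zetaX_add3 i : (i < 6)%N -> z ^+ ((i + 3) %% 6) = - z ^+ i.
Proof. by have h := zeta_sqr; case: i => [|[|[|[|[|[|//]]]]]] _ /=; ring: h. Qed.

Lemma zetaX_succ i : (i < 6)%N -> z ^+ (i.+1 %% 6) = z ^+ i * z.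
Proof. by have h := zeta_sqr; case: i => [|[|[|[|[|[|//]]]]]] _ /=; ring: h. Qed.

End Zeta.

Lemma affine_eq2 (F : fieldType) (c r c' r' x y : F) : x != y ->
  c + r * x = c' + r' * x -> c + r * y = c' + r' * y ->
  forall t, c + r * t = c' + r' * t.
Proof.
move=> xy ex ey.
have er : r = r'.
  have xy0 : x - y != 0 by rewrite subr_eq0.
  apply: (mulIf xy0); apply/eqP; rewrite -subr_eq0; apply/eqP.
  have -> : r * (x - y) - r' * (x - y) = (c + r * x - (c' + r' * x)) - (c + r * y - (c' + r' * y)) by ring.
  by rewrite ex ey !subrr.
by move=> t; move: ex; rewrite er => /addIr ->.
Qed.

Section HexGrid.
Variable R : rcfType.
Local Notation C := R[i].
Local Notation z := (zeta R).

Definition lat_emb (p : latp) : C := p.1%:~R + p.2%:~R * z.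

Lemma lat_emb_add p q : lat_emb (lat_add p q) = lat_emb p + lat_emb q.
Proof. by case: p q => [p1 p2] [q1 q2]; rewrite /lat_emb /= !intrD; ring. Qed.

Lemma lat_emb_scale k p : lat_emb (lat_scale k p) = k%:~R * lat_emb p.
Proof. by case: p => [p1 p2]; rewrite /lat_emb /= !intrM; ring. Qed.

Lemma lat_emb_dir k : (k < 6)%N -> lat_emb (lat_dir k) = z ^+ k.
Proof.
by have h := zeta_sqr R; case: k => [|[|[|[|[|[|//]]]]]] _; rewrite /lat_emb /=; ring: h.
Qed.

Lemma lat_add_dirK q i : (i < 6)%N ->
  lat_add (lat_add q (lat_dir i)) (lat_dir ((i + 3) %% 6)) = q.
Proof.
by case: q => [q1 q2]; case: i => [|[|[|[|[|[|//]]]]]] _; rewrite /lat_add /=; congr pair; ring.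
Qed.

Lemma lat_add_scaleS p e k :
  lat_add p (lat_scale (k + 1) e) = lat_add (lat_add p (lat_scale k e)) e.
Proof. by case: p e => [p1 p2] [e1 e2]; rewrite /lat_add /lat_scale /=; congr pair; ring. Qed.

Variables A B C' : C.

(* The paper's c_p and r_p (H_p has vertices c_p + r_p zeta^k) of the grid with
   reference triangle (A, B, C'), as functions of p in Lambda. *)
Definition grid_c0 : C := (1 - z) * A + z * C'.
Definition grid_r0 : C := z * (A - C').
Definition grid_g : C := - A + (1 - z) * B + z * C'.
Definition hex_center (P : C) : C := grid_c0 + 2%:R * grid_r0 * P + grid_g * P ^+ 2.
Definition hex_radius (P : C) : C := grid_r0 + grid_g * P.

Lemma hex_radius_shift P e :
  hex_center (P + e) + hex_radius (P + e) * - e = hex_center P + hex_radius P * e.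
Proof. by rewrite /hex_center /hex_radius; ring. Qed.

Definition agrees_at (phi : latp -> latp -> C) (q : latp) : Prop :=
  forall k, (k < 6)%N ->
    phi q (lat_add q (lat_dir k)) = hex_center (lat_emb q) + hex_radius (lat_emb q) * z ^+ k.

Section Agreement.
Variable phi : latp -> latp -> C.
Hypothesis grid : hex_grid phi.

Lemma agrees_at_two q i : (i < 6)%N ->
  phi q (lat_add q (lat_dir i)) = hex_center (lat_emb q) + hex_radius (lat_emb q) * z ^+ i ->
  phi q (lat_add q (lat_dir (i.+1 %% 6))) =
    hex_center (lat_emb q) + hex_radius (lat_emb q) * z ^+ (i.+1 %% 6) ->
  agrees_at phi q.
Proof.
move=> hi ei ei1 k hk; have [cq [rq hq]] := grid.2 q.
have si1 : (i.+1 %% 6 < 6)%N by rewrite ltn_mod.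
rewrite hq // in ei; rewrite hq // zetaX_succ // in ei1.
rewrite hq //; apply: (affine_eq2 _ ei ei1).
rewrite -subr_eq0 -{1}[z ^+ i]mulr1 -mulrBr mulf_eq0 negb_or expf_neq0 ?zeta_neq0 //.
by rewrite subr_eq0 eq_sym zeta_neq1.
Qed.

Lemma agrees_at_neighbours q i : (i < 6)%N ->
  agrees_at phi (lat_add q (lat_dir i)) ->
  agrees_at phi (lat_add q (lat_dir (i.+1 %% 6))) -> agrees_at phi q.
Proof.
move=> hi.
have edge j : (j < 6)%N -> agrees_at phi (lat_add q (lat_dir j)) ->
    phi q (lat_add q (lat_dir j)) = hex_center (lat_emb q) + hex_radius (lat_emb q) * z ^+ j.
  move=> hj aj; have hj3 : ((j + 3) %% 6 < 6)%N by rewrite ltn_mod.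
  rewrite grid.1 // -{2}(lat_add_dirK q hj) aj //.
  by rewrite lat_emb_add lat_emb_dir // zetaX_add3 // hex_radius_shift.
by move=> a1 a2; apply: (agrees_at_two hi); apply: edge; rewrite ?ltn_mod.
Qed.

Lemma agrees_at_pair (m n : int) i (q1 q2 : latp) : (i < 6)%N ->
  q1 = lat_add (m, n) (lat_dir i) -> q2 = lat_add (m, n) (lat_dir (i.+1 %% 6)) ->
  agrees_at phi q1 -> agrees_at phi q2 -> agrees_at phi (m, n).
Proof. by move=> hi -> ->; apply: agrees_at_neighbours. Qed.

Ltac lat_eq := by rewrite /lat_add /=; congr pair; ring.

Lemma agrees_at_row (n : int) : agrees_at phi (0, n) -> agrees_at phi (0, n + 1) ->
  forall m, agrees_at phi (m, n) /\ agrees_at phi (m, n + 1).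
Proof.
move=> a0 a1; elim/int_ind_succ_pred => [//|m [am am1]|m [am am1]]; split.
- by apply: (@agrees_at_pair _ _ 2 (m, n + 1) (m, n)); rewrite //; lat_eq.
- apply: (@agrees_at_pair _ _ 3 (m, n + 1) (m + 1, n)); rewrite //; try lat_eq.
  by apply: (@agrees_at_pair _ _ 2 (m, n + 1) (m, n)); rewrite //; lat_eq.
- apply: (@agrees_at_pair _ _ 0 (m, n) (m - 1, n + 1)); rewrite //; try lat_eq.
  by apply: (@agrees_at_pair _ _ 5 (m, n) (m, n + 1)); rewrite //; lat_eq.
- by apply: (@agrees_at_pair _ _ 5 (m, n) (m, n + 1)); rewrite //; lat_eq.
Qed.

Hypothesis reference : ref_triangle phi = (A, B, C').

Lemma hex_grid_edge q k : (k < 6)%N ->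
  phi q (lat_add q (lat_dir k)) = hex_center (lat_emb q) + hex_radius (lat_emb q) * z ^+ k.
Proof.
have h := zeta_sqr R; case: reference => eA eB eC.
have a00 : agrees_at phi (0, 0).
  apply: (@agrees_at_two _ 0) => //; first by rewrite [LHS]eA /hex_center /hex_radius /grid_c0 /grid_r0 /lat_emb /=; ring.
  by rewrite [LHS](grid.1 (0, 0) 1) // [LHS]eC /hex_center /hex_radius /grid_c0 /grid_r0 /lat_emb /=; ring: h.
have a01 : agrees_at phi (0, 1).
  apply: (@agrees_at_two _ 4) => //.
    by rewrite [LHS]eC /hex_center /hex_radius /grid_c0 /grid_r0 /grid_g /lat_emb /=; ring: h.
  by rewrite [LHS](grid.1 (0, 1) 5) // [LHS]eB /hex_center /hex_radius /grid_c0 /grid_r0 /grid_g /lat_emb /=; ring: h.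
suff rows : forall n m, agrees_at phi (m, n) /\ agrees_at phi (m, n + 1).
  by move: k; case: q => m n; apply: (rows n m).1.
elim/int_ind_succ_pred => [|n rows|n rows] m.
- by apply: agrees_at_row.
- split; first exact: (rows m).2.
  apply: (@agrees_at_pair _ _ 4 (m, n + 1) (m + 1, n + 1)); rewrite //; try lat_eq.
    exact: (rows m).2.
  exact: (rows (m + 1)).2.
- rewrite subrK; split; last exact: (rows m).1.
  apply: (@agrees_at_pair _ _ 1 (m, n) (m - 1, n)); rewrite //; try lat_eq.
    exact: (rows m).1.
  exact: (rows (m - 1)).1.
Qed.

End Agreement.
End HexGrid.

Arguments lat_emb {R} p.

Section Parabola.
Variable R : rcfType.
Local Notation C := R[i].

(* Both sides are quartics in k that agree at k = 0, ..., 4, hence coefficientwise. *)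
Lemma quadratic_sqr_eq_coef (x1 y1 m1 x2 y2 m2 Q : R) : Q != 0 -> (m1 != 0) || (m2 != 0) ->
  (forall k : nat, (x1 + y1 * k%:R + m1 * k%:R ^+ 2) ^+ 2 =
     2 * Q * (x2 + y2 * k%:R + m2 * k%:R ^+ 2) + Q ^+ 2) ->
  [/\ m1 = 0, 2 * x1 * m2 = y1 * y2 & 4 * x2 * m2 = y2 ^+ 2 - y1 ^+ 2].
Proof.
move=> Qn0 mn0 H.
move: (H 0%N) (H 1%N) (H 2%N) (H 3%N) (H 4%N) => {H} E0 E1 E2 E3 E4.
have m10 : m1 = 0.
  have : m1 ^+ 2 = 0 by lra.
  by move/eqP; rewrite sqrf_eq0 => /eqP.
subst m1; rewrite eqxx /= in mn0.
have H2 : y1 ^+ 2 = 2 * Q * m2 by lra.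
have H1 : x1 * y1 = Q * y2 by lra.
have H0 : 2 * Q * x2 = x1 ^+ 2 - Q ^+ 2 by lra.
have y1n0 : y1 != 0.
  apply: contraTneq mn0 => y10; move: H2; rewrite y10 expr0n /= => /esym/eqP.
  by rewrite !mulf_eq0 (negbTE Qn0) pnatr_eq0 /= negbK.
split => //.
- apply: (mulIf y1n0); apply: (mulIf Qn0).
  transitivity (x1 * (2 * Q * m2) * y1); first by ring.
  by rewrite -H2; transitivity (y1 * y1 * (x1 * y1)); [ring | rewrite H1; ring].
- have y1Qn0 : Q * y1 ^+ 2 != 0 by rewrite mulf_neq0 ?sqrf_eq0.
  apply: (mulIf y1Qn0).
  transitivity (2 * m2 * y1 ^+ 2 * (2 * Q * x2)); first by ring.
  rewrite H0; transitivity (2 * m2 * ((x1 * y1) ^+ 2 - Q ^+ 2 * y1 ^+ 2)); first by ring.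
  by rewrite H1 H2; ring.
Qed.

Lemma quadratic_on_parabola0 (X Y M : C) (Q : R) : Q != 0 -> M != 0 ->
  (forall k : nat, let W := X + Y * k%:R + M * k%:R ^+ 2 in
     complex.Re W ^+ 2 = 2 * Q * complex.Im W + Q ^+ 2) ->
  X * (4%:R * M) = Y ^+ 2.
Proof.
case: X Y M => [x1 x2] [y1 y2] [m1 m2] Qn0 Mn0 H.
have mn0 : (m1 != 0) || (m2 != 0).
  by rewrite -negb_and; apply: contra Mn0 => /andP[/eqP-> /eqP->].
have [|m10 e1 e2] := quadratic_sqr_eq_coef (x1 := x1) (y1 := y1) (x2 := x2) (y2 := y2) Qn0 mn0.
  move=> k; move: (H k) => /=; rewrite -(rmorph_nat (real_complex R)) /=.
  by congr (_ = _); [congr (_ ^+ 2) | congr (_ * _ + _)]; ring.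
rewrite -(rmorph_nat (real_complex R)) m10.
by apply/eqP; rewrite eq_complex /=; apply/andP; split; apply/eqP; lra.
Qed.

(* In the frame W = conj u (z - f) the focus is 0 and the directrix is Im W = -Q. *)
Lemma on_parabola_rotated (f d u z : C) : on_parabola f d u z ->
  let W := u^* * (z - f) in let Q := complex.Im (u^* * (f - d)) in
  complex.Re W ^+ 2 = 2 * Q * complex.Im W + Q ^+ 2.
Proof.
rewrite /on_parabola /sqn; case: z f u d => [z1 z2] [f1 f2] [u1 u2] [d1 d2] /= H.
lra.
Qed.

Lemma parabola_focus_quadratic (f d u al be ga : C) :
  parabola_ok f d u -> ga != 0 ->
  (forall k : nat, on_parabola f d u (al + be * k%:R + ga * k%:R ^+ 2)) ->
  f = al - be ^+ 2 / (4%:R * ga).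
Proof.
move=> [un0 Qn0] gan0 H.
have uc0 : u^* != 0 by rewrite conjc_eq0.
have key : (al - f) * (4%:R * ga) = be ^+ 2.
  apply: (mulfI (mulf_neq0 uc0 uc0)).
  transitivity (u^* * (al - f) * (4%:R * (u^* * ga))); first by ring.
  rewrite (quadratic_on_parabola0 (Y := u^* * be) Qn0 (mulf_neq0 uc0 gan0)) => [|k]; first by ring.
  have -> : u^* * (al - f) + u^* * be * k%:R + u^* * ga * k%:R ^+ 2 =
      u^* * (al + be * k%:R + ga * k%:R ^+ 2 - f) by ring.
  exact: on_parabola_rotated (H k).
by rewrite -key; field.
Qed.

End Parabola.

Section SquaredNorm.
Variable R : rcfType.
Local Notation C := R[i].

Lemma sqnM (x y : C) : sqn (x * y) = sqn x * sqn y.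
Proof. by case: x y => [x1 x2] [y1 y2]; rewrite /sqn /=; ring. Qed.

Lemma sqnN (x : C) : sqn (- x) = sqn x.
Proof. by case: x => [x1 x2]; rewrite /sqn /=; ring. Qed.

Lemma sqn_conj (x : C) : sqn x^* = sqn x.
Proof. by case: x => [x1 x2]; rewrite /sqn /=; ring. Qed.

Lemma sqn_eq0 (x : C) : (sqn x == 0) = (x == 0).
Proof.
case: x => [x1 x2]; rewrite /sqn eq_complex /= paddr_eq0 ?sqr_ge0 //.
by rewrite !sqrf_eq0.
Qed.

Lemma sqn_eq1_neq0 (x : C) : sqn x = 1 -> x != 0.
Proof. by apply: contra_eq_neq => ->; rewrite /sqn /= expr0n addr0 eq_sym oner_eq0. Qed.

Lemma sqn_real (c : R) : sqn c%:C = c ^+ 2.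
Proof. by rewrite /sqn /=; ring. Qed.

Lemma sqn_natmul n (x : C) : sqn (n%:R * x) = n%:R ^+ 2 * sqn x.
Proof. by rewrite -(rmorph_nat (real_complex R)) sqnM sqn_real. Qed.

Lemma sqn_zeta_add1 : sqn (zeta R + 1) = 3.
Proof. by rewrite /sqn /zeta /=; have h := sqr_sqrt3 R; field: h. Qed.

Lemma sqn_zeta_double_sub1 : sqn (2%:R * zeta R - 1) = 3.
Proof. by rewrite /sqn /zeta /=; have h := sqr_sqrt3 R; field: h. Qed.

Lemma sqn_2_sub_zeta : sqn (2%:R - zeta R) = 3.
Proof. by rewrite /sqn /zeta /=; have h := sqr_sqrt3 R; field: h. Qed.

End SquaredNorm.

Section Foci.
Variable R : rcfType.
Local Notation C := R[i].
Local Notation z := (zeta R).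
Variables A B C' : C.
Local Notation c0 := (grid_c0 A C').
Local Notation r0 := (grid_r0 A C').
Local Notation g := (grid_g A B C').

Lemma chain_vertex_dir phi p j k : hex_grid phi -> ref_triangle phi = (A, B, C') -> (j < 6)%N ->
  let P := lat_emb p + k%:~R * z ^+ j in
  chain_vertex phi p (lat_dir j) k = hex_center A B C' P + hex_radius A B C' P * z ^+ j.
Proof.
move=> grid ref hj; rewrite /chain_vertex lat_add_scaleS (hex_grid_edge grid ref) //.
by rewrite lat_emb_add lat_emb_scale lat_emb_dir.
Qed.

Lemma chain_focus_dir phi j f : hex_grid phi -> ref_triangle phi = (A, B, C') -> (j < 6)%N ->
  g != 0 -> chain_focus phi (lat_dir j) f -> f = c0 - r0 ^+ 2 / g - g * z ^+ (2 * j) / 4%:R.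
Proof.
move=> grid ref hj gn0 /(_ (0, 0)) [d [u [ok onp]]].
have en0 : z ^+ j != 0 by rewrite expf_neq0 ?zeta_neq0.
rewrite (@parabola_focus_quadratic _ f d u (c0 + r0 * z ^+ j) (2%:R * r0 * z ^+ j + g * z ^+ (2 * j))
  (g * z ^+ (2 * j)) ok); last 2 first.
- by rewrite mulf_neq0 // mulnC exprM expf_neq0.
- move=> k; move: (onp k); rewrite chain_vertex_dir //.
  by congr on_parabola; rewrite /hex_center /hex_radius /lat_emb /= mulnC exprM; ring.
by rewrite mulnC exprM; field; rewrite gn0 en0.
Qed.

Lemma focal_equilateral_foci fa fb fc : g != 0 -> focal_equilateral A B C' fa fb fc ->
  let F := c0 - r0 ^+ 2 / g in
  [/\ fa = F - g / 4%:R, fb = F - g * z ^+ 4 / 4%:R & fc = F - g * z ^+ 2 / 4%:R].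
Proof.
move=> gn0 [phi [grid [ref [fA [fB fC]]]]].
rewrite (chain_focus_dir (j := 0) grid ref _ gn0 fA) // (chain_focus_dir (j := 2) grid ref _ gn0 fB) //.
by rewrite (chain_focus_dir (j := 1) grid ref _ gn0 fC) // expr0 mulr1.
Qed.

Lemma focal_equilateral_centroid fa fb fc : g != 0 -> focal_equilateral A B C' fa fb fc ->
  (fa + fb + fc) / 3%:R = c0 - r0 ^+ 2 / g.
Proof.
move=> gn0 /(focal_equilateral_foci gn0) [-> -> ->].
by have h := zeta_sqr R; field: h.
Qed.

Lemma focal_equilateral_side fa fb fc : g != 0 -> focal_equilateral A B C' fa fb fc ->
  [/\ sqn (fa - fb) = 3 / 16 * sqn g, sqn (fb - fc) = 3 / 16 * sqn g &
      sqn (fc - fa) = 3 / 16 * sqn g].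
Proof.
move=> gn0 /(focal_equilateral_foci gn0) [-> -> ->]; have h := zeta_sqr R.
have side (x y e : C) : 4%:R * (x - y) = g * e -> sqn e = 3 -> sqn (x - y) = 3 / 16 * sqn g.
  by move=> /(congr1 (@sqn R)); rewrite sqn_natmul sqnM => + e3; rewrite e3; lra.
split; [apply: (side _ _ (- (z + 1))) | apply: (side _ _ (2%:R * z - 1)) |
        apply: (side _ _ (2%:R - z))]; rewrite ?sqnN ?sqn_zeta_add1 ?sqn_zeta_double_sub1 ?sqn_2_sub_zeta //.
all: by field: h.
Qed.

End Foci.

Section Ellipse.
Variable R : rcfType.
Local Notation C := R[i].
Local Notation z := (zeta R).

Definition stretch (a b : R) (E : C) : C := (a * complex.Re E) +i* (b * complex.Im E).

Lemma stretchD a b (u v : C) : stretch a b (u + v) = stretch a b u + stretch a b v.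
Proof. by case: u v => [u1 u2] [v1 v2]; apply/eqP; rewrite eq_complex /=; apply/andP; split; apply/eqP; ring. Qed.

Lemma stretchB a b (u v : C) : stretch a b (u - v) = stretch a b u - stretch a b v.
Proof. by case: u v => [u1 u2] [v1 v2]; apply/eqP; rewrite eq_complex /=; apply/andP; split; apply/eqP; ring. Qed.

Lemma stretch_eq0 a b (E : C) : a != 0 -> b != 0 -> (stretch a b E == 0) = (E == 0).
Proof.
case: E => [e1 e2] an0 bn0; rewrite !eq_complex /= !mulf_eq0.
by rewrite (negbTE an0) (negbTE bn0).
Qed.

Lemma Im_conj_stretch a b (u v : C) :
  complex.Im ((stretch a b u)^* * stretch a b v) = a * b * complex.Im (u^* * v).
Proof. by case: u v => [u1 u2] [v1 v2] /=; ring. Qed.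

Lemma stretch_conj_form a b (E : C) :
  stretch a b E = ((a + b) / 2)%:C * E + ((a - b) / 2)%:C * E^*.
Proof.
by case: E => [e1 e2]; apply/eqP; rewrite eq_complex /=; apply/andP; split; apply/eqP; field.
Qed.

Lemma stretch_zeta_sqrM a b (E : C) :
  stretch a b (z ^+ 2 * E) = ((a + b) / 2)%:C * z ^+ 2 * E - ((a - b) / 2)%:C * z * E^*.
Proof.
rewrite zeta_sqr; have h := sqr_sqrt3 R; case: E => [e1 e2].
by apply/eqP; rewrite eq_complex /=; apply/andP; split; apply/eqP; field: h.
Qed.

Lemma stretch_opp_zetaM a b (E : C) :
  stretch a b (- z * E) = - ((a + b) / 2)%:C * z * E + ((a - b) / 2)%:C * z ^+ 2 * E^*.
Proof.
rewrite zeta_sqr; have h := sqr_sqrt3 R; case: E => [e1 e2].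
by apply/eqP; rewrite eq_complex /=; apply/andP; split; apply/eqP; field: h.
Qed.

Lemma conj_mulrl (w x y : C) : (w * x)^* * (w * y) = (sqn w)%:C * (x^* * y).
Proof.
by case: w x y => [w1 w2] [x1 x2] [y1 y2]; apply/eqP; rewrite eq_complex /sqn /=;
  apply/andP; split; apply/eqP; ring.
Qed.

Lemma mulr_conj (x : C) : x * x^* = (sqn x)%:C.
Proof.
by case: x => [x1 x2]; apply/eqP; rewrite eq_complex /sqn /=; apply/andP; split; apply/eqP; ring.
Qed.

Lemma on_ellipse_stretch (O w : C) (a b : R) (P : C) : a != 0 -> b != 0 -> sqn w = 1 ->
  on_ellipse O w a b P -> exists E, sqn E = 1 /\ P = O + w * stretch a b E.
Proof.
move=> an0 bn0 w1; rewrite /on_ellipse /= => onE.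
exists ((complex.Re (w^* * (P - O)) / a) +i* (complex.Im (w^* * (P - O)) / b)); split.
  by rewrite -onE /sqn /=; field; rewrite an0 bn0.
have -> : forall P' : C, stretch a b ((complex.Re P' / a) +i* (complex.Im P' / b)) = P'.
  by case=> [p1 p2]; apply/eqP; rewrite eq_complex /=; apply/andP; split; apply/eqP; field.
by rewrite mulrA mulr_conj w1 mul1r addrC subrK.
Qed.

Lemma unit_triple_rotation (E1 E2 E3 : C) :
  sqn E1 = 1 -> sqn E2 = 1 -> sqn E3 = 1 -> E1 + E2 + E3 = 0 ->
  0 < complex.Im ((E2 - E1)^* * (E3 - E1)) -> E2 = z ^+ 2 * E1 /\ E3 = - z * E1.
Proof.
move=> u1 u2 u3 /eqP; rewrite addrC addr_eq0 => /eqP E3e; subst E3; move: u3.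
rewrite (zeta_sqr R) /zeta /sqn; case: E1 E2 u1 u2 => [x y] [x2 y2] /= u1 u2 u3 pos.
rewrite /sqn /= in u1 u2.
have dot : x * x2 + y * y2 = - (1 / 2) by lra.
have cross : (x * y2 - y * x2) ^+ 2 = (Num.sqrt 3 / 2) ^+ 2.
  transitivity ((x ^+ 2 + y ^+ 2) * (x2 ^+ 2 + y2 ^+ 2) - (x * x2 + y * y2) ^+ 2); first by ring.
  by rewrite u1 u2 dot expr_div_n sqr_sqrt3; field.
have {cross} cross : x * y2 - y * x2 = Num.sqrt 3 / 2.
  by apply/eqP; rewrite -(@eqrXn2 _ 2) ?cross // ?divr_ge0 ?sqrtr_ge0 //; lra.
have ex2 : x2 = - x / 2 - Num.sqrt 3 / 2 * y.
  rewrite -cross; transitivity (x2 * (x ^+ 2 + y ^+ 2)); first by rewrite u1 mulr1.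
  transitivity ((x * x2 + y * y2) * x - (x * y2 - y * x2) * y); first by ring.
  by rewrite dot; ring.
have ey2 : y2 = Num.sqrt 3 / 2 * x - y / 2.
  rewrite -cross; transitivity (y2 * (x ^+ 2 + y ^+ 2)); first by rewrite u1 mulr1.
  transitivity ((x * y2 - y * x2) * x + (x * x2 + y * y2) * y); first by ring.
  by rewrite dot; ring.
by split; apply/eqP; rewrite eq_complex /= ?ex2 ?ey2; apply/andP; split; apply/eqP; field.
Qed.

Lemma homothetic_member_stretch (O w : C) (a b : R) (A B C' : C) :
  0 < a -> 0 < b -> sqn w = 1 -> homothetic_member O w a b A B C' ->
  exists E, [/\ sqn E = 1, A = O + w * stretch a b E,
    B = O + w * stretch a b (z ^+ 2 * E) & C' = O + w * stretch a b (- z * E)].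
Proof.
move=> a0 b0 w1 [/on_ellipse_stretch eA [/on_ellipse_stretch eB [/on_ellipse_stretch eC [cen pos]]]].
have an0 : a != 0 by rewrite gt_eqF.
have bn0 : b != 0 by rewrite gt_eqF.
have [E1 [u1 eA1]] := eA an0 bn0 w1.
have [E2 [u2 eB2]] := eB an0 bn0 w1.
have [E3 [u3 eC3]] := eC an0 bn0 w1.
rewrite {}eA1 {}eB2 {}eC3 in cen pos *.
have wn0 := sqn_eq1_neq0 w1.
have sum0 : E1 + E2 + E3 = 0.
  suff /eqP : w * stretch a b (E1 + E2 + E3) = 0.
    by rewrite mulf_eq0 (negbTE wn0) stretch_eq0 // => /eqP.
  rewrite !stretchD; transitivity (3%:R * ((O + w * stretch a b E1 + (O + w * stretch a b E2) +
    (O + w * stretch a b E3)) / 3%:R - O)); first by field.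
  by rewrite cen subrr mulr0.
have shift (x y : C) : O + x - (O + y) = x - y by ring.
move: pos; rewrite /ccw !shift -!mulrBr conj_mulrl -!stretchB w1 mul1r.
rewrite Im_conj_stretch pmulr_rgt0 ?mulr_gt0 // => pos.
have [e2 e3] := unit_triple_rotation u1 u2 u3 sum0 pos.
by exists E1; split; rewrite // -?e2 -?e3.
Qed.

End Ellipse.

Section Homothetic.
Variable R : rcfType.
Local Notation C := R[i].
Local Notation z := (zeta R).
Variables (O w E : C) (a b : R).
Local Notation p := ((a + b) / 2).
Local Notation q := ((a - b) / 2).
Local Notation A := (O + w * stretch a b E).
Local Notation B := (O + w * stretch a b (z ^+ 2 * E)).
Local Notation C' := (O + w * stretch a b (- z * E)).

Lemma homothetic_grid_g : grid_g A B C' = - 3%:R * q%:C * w * E^*.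
Proof.
rewrite /grid_g stretch_conj_form stretch_zeta_sqrM stretch_opp_zetaM.
by have h := zeta_sqr R; ring: h.
Qed.

Lemma homothetic_grid_g_sqn : sqn w = 1 -> sqn E = 1 -> sqn (grid_g A B C') = 9 * q ^+ 2.
Proof.
move=> w1 E1; rewrite homothetic_grid_g !sqnM sqnN sqn_conj w1 E1 sqn_real.
by rewrite -(rmorph_nat (real_complex R)) sqn_real; ring.
Qed.

Lemma homothetic_grid_g_neq0 : sqn w = 1 -> sqn E = 1 -> a != b -> grid_g A B C' != 0.
Proof.
move=> w1 E1 ab; have qn0 : q != 0 by rewrite mulf_neq0 ?subr_eq0 ?invr_eq0 ?pnatr_eq0.
by rewrite -sqn_eq0 homothetic_grid_g_sqn // mulf_neq0 ?pnatr_eq0 ?expf_neq0.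
Qed.

Lemma homothetic_focal_centre : sqn E = 1 -> w != 0 -> a != b ->
  grid_c0 A C' - grid_r0 A C' ^+ 2 / grid_g A B C' - O = - (p ^+ 2 / q)%:C * w * E ^+ 3.
Proof.
move=> E1 wn0 ab; have En0 := sqn_eq1_neq0 E1.
(* Spelled out: in this position [E^*] would parse as [conjc E], not as the
   [Num.conj E] produced by [stretch_conj_form]. *)
have Ec : Num.conj E = E^-1 by apply: (mulfI En0); rewrite mulr_conj E1 divff.
rewrite homothetic_grid_g /grid_c0 /grid_r0 stretch_conj_form stretch_opp_zetaM Ec.
have h := zeta_sqr R; field: h.
by rewrite subr_eq0 (inj_eq (@complexI R)) ab En0 wn0.
Qed.

End Homothetic.

Theorem mainTheorem18 (R : rcfType) (O w : R[i]) (a b : R) :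
  0 < a -> 0 < b -> a != b -> sqn w = 1 ->
  exists s r : R,
    forall A B C fa fb fc : R[i],
      homothetic_member O w a b A B C ->
      focal_equilateral A B C fa fb fc ->
      (sqn (fa - fb) = s /\ sqn (fb - fc) = s /\ sqn (fc - fa) = s) /\
      sqn ((fa + fb + fc) / 3%:R - O) = r ^+ 2.
Proof.
move=> a0 b0 ab w1; set p := (a + b) / 2; set q := (a - b) / 2.
exists (27 / 16 * q ^+ 2), (p ^+ 2 / q) => A B C fa fb fc hm foc.
have [E [E1 eA eB eC]] := homothetic_member_stretch a0 b0 w1 hm; subst A B C.
have gn0 := homothetic_grid_g_neq0 O w1 E1 ab.
have [s1 s2 s3] := focal_equilateral_side gn0 foc.
rewrite s1 s2 s3 homothetic_grid_g_sqn // (focal_equilateral_centroid gn0 foc).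
rewrite homothetic_focal_centre ?sqn_eq1_neq0 // !sqnM sqnN E1 w1 sqn_real.
by rewrite /p /q; split; [split; [|split] |]; field; rewrite ?subr_eq0.
Qed.
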